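(* Let $\Xi\subset\mathbb M$ be finite with separation distance $q$, let $c>0$ and $r\ge2q$. Then for any $\eta\in\mathbb M$, $$\sum_{\substack{\xi\in\Xi\\ \mathrm{dist}(\xi,\eta)>r}}e^{-c\,\mathrm{dist}(\xi,\eta)}\le\frac{\beta_{\mathbb M}}{\alpha_{\mathbb M}}\Big(\frac rq\Big)^de^{-cr}\Big(\sum_{j=0}^\infty(j+2)^de^{-cjq}\Big).$$
   Context: $\mathbb M$ is a compact $d$-dimensional Riemannian manifold without boundary with volume measure $\mu$ and geodesic distance $\mathrm{dist}$; $0<\alpha_{\mathbb M}\le\beta_{\mathbb M}$ are constants such that $\alpha_{\mathbb M}r^d\le\mu(B(x,r))\le\beta_{\mathbb M}r^d$ for all $x\in\mathbb M$ and $0<r<\mathrm{diam}(\mathbb M)$. The separation distance of finite $\Xi$ is $q=\frac12\min_{\zeta\in\Xi}\mathrm{dist}(\zeta,\Xi\setminus\{\zeta\})$. *)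

From HB Require Import structures.
From mathcomp Require Import all_boot all_order all_algebra.
From mathcomp Require Import all_classical all_reals all_analysis.
Set Implicit Arguments. Unset Strict Implicit. Unset Printing Implicit Defensive.
Import Order.TTheory GRing.Theory Num.Theory.
Local Open Scope classical_set_scope.
Local Open Scope ring_scope.

Definition is_metric (R : realType) (T : Type) (dist : T -> T -> R) : Prop :=
  (forall x y, 0 <= dist x y) /\
  (forall x y, dist x y = 0 <-> x = y) /\
  (forall x y, dist x y = dist y x) /\
  (forall x y z, dist x z <= dist x y + dist y z).

Definition mball (R : realType) (T : Type) (dist : T -> T -> R) (x : T) (r : R)
  : set T := [set y | dist x y < r].

Definition mdiam (R : realType) (T : Type) (dist : T -> T -> R) : R :=
  sup [set dist x y | x in [set: T] & y in [set: T]].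

Definition sepdist (R : realType) (T : eqType) (dist : T -> T -> R) (Xi : seq T) : R :=
  2^-1 * inf [set inf [set dist zeta z | z in [set z | z \in Xi /\ z != zeta]]
             | zeta in [set zeta | zeta \in Xi]].

From HB Require Import structures.
From mathcomp Require Import all_boot all_order all_algebra.
From mathcomp Require Import all_classical all_reals all_analysis.
From mathcomp Require Import ring lra.
Import Order.TTheory GRing.Theory Num.Theory.
Local Open Scope classical_set_scope.
Local Open Scope ring_scope.

(* The points of Xi are 2q-separated, so the balls B(xi, q) are pairwise
   disjoint; comparing their total volume, at least alpha q^d each, with that
   of the ball B(eta, rho + q) containing them, at most beta (rho + q)^d,
   bounds the number of points of Xi in B(eta, rho).  The points with
   dist(xi, eta) > r are sorted into the shells
   r + j q <= dist(xi, eta) < r + (j + 1) q: since r >= 2q, shell j holds at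
   most (beta/alpha) (r/q)^d (j + 2)^d points, each contributing at most
   e^(-cr) e^(-cjq). *)

Lemma inf_ge0 (R : realType) (A : set R) : (forall x, A x -> 0 <= x) -> 0 <= inf A.
Proof.
move=> A_ge0; have [->|/set0P A0] := eqVneq A set0; first by rewrite inf0.
exact: lb_le_inf.
Qed.

Lemma inf_finite_gt0 (R : realType) (A : set R) :
  finite_set A -> A !=set0 -> (forall x, A x -> 0 < x) -> 0 < inf A.
Proof.
move=> /finite_seqP[s ->] A0 A_gt0.
apply: (@lt_le_trans _ _ (\big[Order.min/1]_(x <- s) x)).
  by rewrite big_seq; apply: lt_bigmin => // x; apply: A_gt0.
by apply: lb_le_inf A0 _ => x xs; apply: ge_bigmin_seq.
Qed.

Lemma uniq_exists_neq {T : eqType} {s : seq T} (x : T) :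
  uniq s -> (2 <= size s)%N -> exists2 y, y \in s & y != x.
Proof.
case: s => [|a [|b s]] //= /andP[]; rewrite in_cons negb_or => /andP[ab _] _ _.
have [<-|ax] := eqVneq a x; last by exists a; rewrite ?mem_head.
by exists b; rewrite 1?eq_sym // !in_cons eqxx orbT.
Qed.

Section SeparationDistance.
Context {R : realType} {T : eqType} {dist : T -> T -> R} {Xi : seq T}.
Hypothesis dist_ge0 : forall x y, 0 <= dist x y.

Let neighbours (x : T) := [set dist x z | z in [set z | z \in Xi /\ z != x]].

Let sepdist2E : 2 * sepdist dist Xi = inf [set inf (neighbours z) | z in [set` Xi]].
Proof. by rewrite /sepdist mulrA divff ?pnatr_eq0 // mul1r. Qed.

Lemma sepdist_le_dist x y : x \in Xi -> y \in Xi -> x != y ->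
  2 * sepdist dist Xi <= dist x y.
Proof.
move=> xXi yXi xy; rewrite sepdist2E.
apply: (@le_trans _ _ (inf (neighbours x))).
  apply: ge_inf; last by exists x.
  by exists 0 => _ [z _ <-]; apply: inf_ge0 => _ [w _ <-].
by apply: ge_inf; [exists 0 => _ [z _ <-]|exists y => //; split; rewrite 1?eq_sym].
Qed.

Hypothesis dist_gt0 : forall x y, x != y -> 0 < dist x y.

Lemma sepdist_gt0 : uniq Xi -> (2 <= size Xi)%N -> 0 < sepdist dist Xi.
Proof.
move=> Xi_uniq Xi_size; rewrite -[_ < _](pmulr_rgt0 _ (ltr0n _ 2)) sepdist2E.
have neighbours_finite z : finite_set (neighbours z).
  by apply: finite_image; apply: sub_finite_set (finite_seq Xi) => w [].
have neighbours_n0 z : neighbours z !=set0.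
  by have [w wXi wz] := uniq_exists_neq z Xi_uniq Xi_size; exists (dist z w), w.
apply: inf_finite_gt0.
- exact/finite_image/finite_seq.
- have [x xXi] : exists x, x \in Xi.
    by case: (Xi) Xi_size => // x s _; exists x; rewrite mem_head.
  by exists (inf (neighbours x)), x.
- move=> _ [z zXi <-]; apply: inf_finite_gt0 => //.
  by move=> _ [w [_ wz] <-]; apply: dist_gt0; rewrite eq_sym.
Qed.

End SeparationDistance.

Lemma sum_le_level_counts {R : numDomainType} {I : eqType} {s : seq I} {P : pred I}
    {k : I -> nat} {F : I -> R} {g : nat -> R} {N : nat} :
  (forall x, x \in s -> P x -> (k x < N)%N) ->
  (forall x, x \in s -> P x -> F x <= g (k x)) ->
  \sum_(x <- s | P x) F x <=
    \sum_(0 <= j < N) (count (fun x => P x && (k x == j)) s)%:R * g j.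
Proof.
move=> k_lt F_le; rewrite big_seq_cond.
apply: (@le_trans _ _ (\sum_(x <- s | (x \in s) && P x)
                          \sum_(0 <= j < N | j == k x) g j)).
  apply: ler_sum => x /andP[xs Px].
  by rewrite big_nat1_eq leq0n k_lt //= F_le.
rewrite (exchange_big_dep xpredT) //=; apply: ler_sum => j _.
rewrite big_const_seq iter_addr_0 mulr_natl.
have -> // : count (fun x => (x \in s) && P x && (j == k x)) s =
             count (fun x => P x && (k x == j)) s.
by apply: eq_in_count => x xs; rewrite xs eq_sym.
Qed.

Lemma sum_le_scaled_nneseries {R : realType} {a : R} {u : nat -> R} (N : nat) :
  0 <= a -> (forall j, 0 <= u j) ->
  ((\sum_(0 <= j < N) a * u j)%:E <= a%:E * \sum_(0 <= j <oo) (u j)%:E)%E.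
Proof.
move=> a_ge0 u_ge0; rewrite -mulr_sumr EFinM lee_wpmul2l ?lee_fin //.
by rewrite -sumEFin; apply: nneseries_lim_ge => j _ _; rewrite lee_fin.
Qed.

Definition shell_index {R : realType} (q r t : R) : nat := Num.truncn ((t - r) / q).

Lemma shell_indexP {R : realType} {q r t : R} : 0 < q -> r <= t ->
  r + (shell_index q r t)%:R * q <= t < r + (shell_index q r t).+1%:R * q.
Proof.
move=> q_gt0 rt; set k := shell_index q r t.
have /andP[k_le k_gt] : k%:R <= (t - r) / q < k.+1%:R.
  by apply: truncn_itv; apply: divr_ge0; [rewrite subr_ge0|exact: ltW].
by rewrite -lerBrDl -ltrBlDl -ler_pdivlMr // -ltr_pdivrMr // k_le k_gt.
Qed.

Lemma dist_le_mdiam {R : realType} {T : Type} {dist : T -> T -> R} :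
  (exists B, forall x y, dist x y <= B) -> forall x y, dist x y <= mdiam dist.
Proof.
move=> [B dist_le] x y; apply: ub_le_sup; last by exists x => //; exists y.
by exists B => _ [a _ [b _ <-]].
Qed.

Section Packing.
Context {R : realType} {disp : measure_display} {T : measurableType disp}.
Context {mu : {measure set T -> \bar R}} {dist : T -> T -> R}.
Context {dim : nat} {alphaM betaM : R}.
Hypothesis dist_metric : is_metric dist.
Hypothesis dist_bounded : exists B, forall x y, dist x y <= B.
Hypothesis ball_measurable : forall x r, measurable (mball dist x r).
Hypothesis alpha_gt0 : 0 < alphaM.
Hypothesis alpha_le_beta : alphaM <= betaM.
Hypothesis measure_ball_bounds : forall x r, 0 < r -> r < mdiam dist ->
  ((alphaM * r ^+ dim)%:E <= mu (mball dist x r))%E /\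
  (mu (mball dist x r) <= (betaM * r ^+ dim)%:E)%E.
Hypothesis measure_setT_le : (mu [set: T] <= (betaM * mdiam dist ^+ dim)%:E)%E.

Lemma measure_ball_le x rho : 0 < rho ->
  (mu (mball dist x rho) <= (betaM * rho ^+ dim)%:E)%E.
Proof.
move=> rho_gt0; have [rho_lt|diam_le] := ltP rho (mdiam dist).
  exact: (measure_ball_bounds x _ rho_gt0 rho_lt).2.
have [dist_ge0 _] := dist_metric.
have diam_ge0 : 0 <= mdiam dist.
  exact: le_trans (dist_ge0 x x) (dist_le_mdiam dist_bounded x x).
rewrite (le_trans (le_measure _ _ _ (subsetT _))) ?inE //.
apply: le_trans measure_setT_le _; rewrite lee_fin ler_wpM2l ?lerXn2r ?nnegrE //.
  exact: le_trans (ltW alpha_gt0) alpha_le_beta.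
exact: ltW.
Qed.

Lemma packing_bound (s : seq T) (x0 : T) (rho rad : R) :
  uniq s -> 0 < rho -> rho < mdiam dist -> 0 <= rad ->
  {in s &, forall x y, x != y -> 2 * rho <= dist x y} ->
  {in s, forall x, dist x x0 < rad} ->
  (size s)%:R * (alphaM * rho ^+ dim) <= betaM * (rad + rho) ^+ dim.
Proof.
move=> s_uniq rho_gt0 rho_lt rad_ge0 s_sep s_near.
have [_ [_ [dist_sym dist_tri]]] := dist_metric.
pose B x := mball dist x rho.
have B_disj : trivIset [set` s] B.
  move=> x y xs ys [z [Bxz Byz]]; have [//|xy] := eqVneq x y; exfalso.
  have := s_sep x y xs ys xy; have := dist_tri x z y.
  rewrite /B /mball /= in Bxz Byz; rewrite (dist_sym z y); lra.
have B_sub : \bigcup_(x in [set` s]) B x `<=` mball dist x0 (rad + rho).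
  move=> z [x xs Bxz]; rewrite /B /mball /= in Bxz *.
  have := s_near x xs; have := dist_tri x0 x z; rewrite (dist_sym x0 x); lra.
have -> : (size s)%:R * (alphaM * rho ^+ dim) = \sum_(x <- s) alphaM * rho ^+ dim.
  by rewrite big_const_seq count_predT iter_addr_0 mulr_natl.
rewrite -lee_fin -sumEFin.
apply: (@le_trans _ _ (\sum_(x <- s) mu (B x))%E).
  by apply: lee_sum => x _; apply: (measure_ball_bounds x _ rho_gt0 rho_lt).1.
have B_measurable x : [set` s] x -> measurable (B x) by move=> _; exact: ball_measurable.
rewrite fsbig_seq // -measure_fin_bigcup //.
have rad_rho_gt0 : 0 < rad + rho by lra.
apply: le_trans _ (measure_ball_le x0 _ rad_rho_gt0); apply: le_measure; rewrite ?inE //.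
exact: fin_bigcup_measurable.
Qed.

Lemma shell_count_le {Xi : seq T} (eta : T) {q r : R} (j : nat) :
  uniq Xi -> 0 < q -> q < mdiam dist -> 2 * q <= r ->
  {in Xi &, forall x y, x != y -> 2 * q <= dist x y} ->
  (count (fun x => (r < dist x eta) && (shell_index q r (dist x eta) == j)) Xi)%:R
    <= betaM / alphaM * (r / q) ^+ dim * (j + 2)%:R ^+ dim.
Proof.
move=> Xi_uniq q_gt0 q_lt r_ge Xi_sep; rewrite -size_filter.
set shell := seq.filter _ Xi.
have shell_near : {in shell, forall x, dist x eta < r + j.+1%:R * q}.
  move=> x; rewrite mem_filter => /andP[/andP[r_lt /eqP <-] _].
  by have /andP[] := shell_indexP q_gt0 (ltW r_lt).
have shell_sep : {in shell &, forall x y, x != y -> 2 * q <= dist x y}.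
  by move=> x y; rewrite !mem_filter => /andP[_ xXi] /andP[_ yXi]; apply: Xi_sep.
have j_ge0 : 0 <= j%:R :> R := ler0n _ _.
have j1E : j.+1%:R = j%:R + 1 :> R by rewrite -addn1 natrD.
have j2E : (j + 2)%:R = j%:R + 2 :> R by rewrite natrD.
have rad_ge0 : 0 <= r + j.+1%:R * q by rewrite j1E; nra.
have packed := packing_bound shell eta q (r + j.+1%:R * q) (filter_uniq _ Xi_uniq)
  q_gt0 q_lt rad_ge0 shell_sep shell_near.
have aq_gt0 : 0 < alphaM * q ^+ dim by rewrite mulr_gt0 ?exprn_gt0.
rewrite -(ler_pM2r aq_gt0) (le_trans packed) //.
have -> : betaM / alphaM * (r / q) ^+ dim * (j + 2)%:R ^+ dim * (alphaM * q ^+ dim)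
          = betaM * ((j + 2)%:R * r) ^+ dim.
  by rewrite !exprMn exprVn; field; rewrite (gt_eqF (exprn_gt0 _ q_gt0)) gt_eqF.
apply: ler_wpM2l; first exact: le_trans (ltW alpha_gt0) alpha_le_beta.
by rewrite j1E j2E lerXn2r ?nnegrE; nra.
Qed.

End Packing.

Theorem lemma7p1 (R : realType) (disp : measure_display) (T : measurableType disp)
  (mu : {measure set T -> \bar R}) (dist : T -> T -> R) (dim : nat)
  (alphaM betaM : R)
  (hmetric : is_metric dist)
  (hbounded : exists B : R, forall x y, dist x y <= B)
  (hballs : forall x r, measurable (mball dist x r))
  (halpha : 0 < alphaM) (halphabeta : alphaM <= betaM)
  (hvol : forall x r, 0 < r -> r < mdiam dist ->
     ((alphaM * r ^+ dim)%:E <= mu (mball dist x r))%E /\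
     (mu (mball dist x r) <= (betaM * r ^+ dim)%:E)%E)
  (htotal : (mu [set: T] <= (betaM * (mdiam dist) ^+ dim)%:E)%E)
  (Xi : seq T) (huniq : uniq Xi) (hsize : (2 <= size Xi)%N)
  (c r : R) (hc : 0 < c) (hr : 2 * sepdist dist Xi <= r) (eta : T) :
  ((\sum_(xi <- Xi | r < dist xi eta) expR (- (c * dist xi eta)))%:E <=
   (betaM / alphaM * (r / sepdist dist Xi) ^+ dim * expR (- (c * r)))%:E *
   (\sum_(0 <= j <oo) (((j + 2)%:R) ^+ dim
                        * expR (- (c * j%:R * sepdist dist Xi)))%:E))%E.
Proof.
have [dist_ge0 [dist_eq0 _]] := hmetric.
have dist_gt0 x y : x != y -> 0 < dist x y.
  by move=> xy; rewrite lt0r dist_ge0 andbT; apply: contra xy => /eqP/dist_eq0 ->.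
set q := sepdist dist Xi in hr *.
have q_gt0 : 0 < q := sepdist_gt0 dist_gt0 huniq hsize.
have Xi_sep : {in Xi &, forall x y, x != y -> 2 * q <= dist x y}.
  by move=> x y; apply: sepdist_le_dist.
have q_lt_diam : q < mdiam dist.
  have [x xXi _] := uniq_exists_neq eta huniq hsize.
  have [y yXi yx] := uniq_exists_neq x huniq hsize.
  have := Xi_sep _ _ yXi xXi yx; have := dist_le_mdiam hbounded y x; lra.
pose k x := shell_index q r (dist x eta).
pose N := (\max_(x <- Xi) k x).+1.
pose g j := expR (- (c * r)) * expR (- (c * j%:R * q)).
pose K := betaM / alphaM * (r / q) ^+ dim * expR (- (c * r)).
pose A (j : nat) := (j + 2)%:R ^+ dim * expR (- (c * j%:R * q)).
have K_ge0 : 0 <= K.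
  by rewrite !mulr_ge0 ?expR_ge0 ?exprn_ge0 ?divr_ge0 ?invr_ge0 //; lra.
have A_ge0 j : 0 <= A j by rewrite mulr_ge0 ?expR_ge0 ?exprn_ge0.
apply: le_trans _ (sum_le_scaled_nneseries N K_ge0 A_ge0); rewrite lee_fin.
apply: le_trans (sum_le_level_counts (k := k) (g := g) (N := N) _ _) _.
- by move=> x xXi _; rewrite ltnS; apply: leq_bigmax_seq.
- move=> x _ r_lt; rewrite /g -expRD ler_expR.
  by have /andP[shell_le _] := shell_indexP q_gt0 (ltW r_lt); nra.
apply: ler_sum => j _.
have -> : K * A j = betaM / alphaM * (r / q) ^+ dim * (j + 2)%:R ^+ dim * g j.
  by rewrite /K /A /g; ring.
apply: ler_wpM2r; first by rewrite mulr_ge0 ?expR_ge0.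
exact: (shell_count_le hmetric hbounded hballs halpha halphabeta hvol htotal eta j
  huniq q_gt0 q_lt_diam hr Xi_sep).
Qed.
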